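(* For integers $r\ge 1$ and $n\ge r+1$, $$\mathfrak{q}_{r-1}({\sf T}_n^r)=rn-r^2+1.$$
   Context: A (finite abstract) simplicial complex is a family of subsets of a finite vertex set closed under taking subsets; an $i$-face is a member of cardinality $i+1$; $S_i(K)$ is the set of $i$-faces. For an $i$-face $F$, $d_K(F)$ is the number of $(i+1)$-faces containing $F$; two distinct $i$-faces are up-neighbors if their union is an $(i+1)$-face. The signless up Laplacian $Q_i^{\mathrm{up}}(K)$ is the operator on $\mathbb{R}^{S_i(K)}$ given by $(Q_i^{\mathrm{up}}(K)f)(F)=d_K(F)f(F)+\sum_{F'\text{ up-neighbor of }F}f(F')$, and $\mathfrak{q}_i(K)$ is its largest eigenvalue. The tented complex ${\sf T}_n^r$ is the pure $r$-dimensional complex on vertex set $[n]$ whose facets are the sets $\{n\}\cup F$ with $F$ an $r$-element subset of $[n-1]$ (together with all their subsets). *)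

From mathcomp Require Import all_boot all_order all_algebra.
Set Implicit Arguments. Unset Strict Implicit. Unset Printing Implicit Defensive.
Import Order.TTheory GRing.Theory Num.Theory.
Local Open Scope ring_scope.

Definition is_simplicial_complex (T : finType) (K : {set {set T}}) : Prop :=
  forall A B : {set T}, A \in K -> B \subset A -> B \in K.

Definition faces (T : finType) (K : {set {set T}}) (i : nat) : {set {set T}} :=
  [set F in K | #|F| == i.+1].

Definition face_deg (T : finType) (K : {set {set T}}) (i : nat) (F : {set T}) : nat :=
  #|[set G in faces K i.+1 | F \subset G]|.

Definition up_nb (T : finType) (K : {set {set T}}) (i : nat) (F F' : {set T}) : bool :=
  (F != F') && (F :|: F' \in faces K i.+1).

(* The signless up Laplacian Q_i^up(K) acting on functions on S_i(K)
   (functions are represented on all of {set T}; only values on S_i(K) matter). *)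
Definition Qup (R : nzRingType) (T : finType) (K : {set {set T}}) (i : nat)
  (f : {set T} -> R) (F : {set T}) : R :=
  (face_deg K i F)%:R * f F + \sum_(F' in faces K i | up_nb K i F F') f F'.

Definition is_eigenvalue_Qup (R : nzRingType) (T : finType) (K : {set {set T}})
  (i : nat) (lam : R) : Prop :=
  exists f : {set T} -> R,
    (exists2 F, F \in faces K i & f F != 0) /\
    (forall F, F \in faces K i -> Qup K i f F = lam * f F).

Definition is_largest_eigenvalue_Qup (R : realFieldType) (T : finType)
  (K : {set {set T}}) (i : nat) (lam : R) : Prop :=
  is_eigenvalue_Qup K i lam /\
  (forall mu : R, is_eigenvalue_Qup K i mu -> mu <= lam).

(* The tented complex T_n^r on vertex set [n], encoded as 'I_n with vertex k
   represented by the ordinal of value k-1 (so the apex n is the ordinal n-1):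
   all subsets of {n} ∪ F with F an r-element subset of [n-1]. *)
Definition tented (n r : nat) : {set {set 'I_n}} :=
  [set S : {set 'I_n} | [exists F : {set 'I_n},
     [&& #|F| == r, [forall x in F, (val x < n.-1)%N] &
         S \subset F :|: [set x : 'I_n | val x == n.-1]]]].

(* With B the incidence matrix between the (r-1)-faces and the r-faces of T_n^r, the signless
   up Laplacian is Q = B B^T.  The degree vector d = B 1 is therefore mapped to B (B^T d), and
   (B^T d)(G) is the sum of the degrees of the r-element subsets of the facet G: the one missing
   the apex has degree 1, each of the r others has degree n - r.  So d is a positive eigenvector
   with eigenvalue 1 + r(n - r).  As Q has nonnegative entries, comparing an eigenvector f with
   d at a face maximising |f|/d shows that no eigenvalue exceeds that of d. *)
From mathcomp Require Import all_boot all_order all_algebra.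
From mathcomp Require Import ring.
Import Order.TTheory GRing.Theory Num.Theory.

Set Implicit Arguments. Unset Strict Implicit. Unset Printing Implicit Defensive.

Lemma setU1_of_subset_card_succ (T : finType) (S G : {set T}) :
  S \subset G -> #|G| = #|S|.+1 -> exists2 y, y \notin S & G = y |: S.
Proof.
move=> sSG cG; have /cards1P [y Dy] : #|G :\: S| == 1.
  by rewrite cardsD (setIidPr sSG) cG subSnn.
have : y \in G :\: S by rewrite Dy set11.
rewrite in_setD => /andP [yS yG]; exists y => //.
apply/setP => z; rewrite in_setU1; have [zS|zS] := boolP (z \in S).
  by rewrite orbT (subsetP sSG).
by rewrite orbF -in_set1 -Dy in_setD zS.
Qed.

Lemma faces_mem (T : finType) (K : {set {set T}}) i F :
  (F \in faces K i) = (F \in K) && (#|F| == i.+1).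
Proof. by rewrite inE. Qed.

Lemma card_cofaces2 (T : finType) (K : {set {set T}}) i F F' :
  F \in faces K i -> F' \in faces K i -> F' != F ->
  #|[set G in faces K i.+1 | (F \subset G) && (F' \subset G)]| =
  (F :|: F' \in faces K i.+1).
Proof.
rewrite faces_mem => /andP [_ /eqP cF]; rewrite faces_mem => /andP [_ /eqP cF'] F'F.
have ltFU : #|F| < #|F :|: F'|.
  rewrite (ltn_leqif (subset_leqif_cards (subsetUl F F'))).
  apply: contra F'F => /eqP eFU.
  by rewrite eqEcard cF cF' leqnn andbT eFU subsetUr.
have subUE G : G \in faces K i.+1 -> (F :|: F' \subset G) = (G == F :|: F').
  rewrite faces_mem => /andP [_ /eqP cG]; apply/idP/eqP => [sU|->//].
  by apply/esym/eqP; rewrite eqEcard sU cG -cF.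
have -> : [set G in faces K i.+1 | (F \subset G) && (F' \subset G)] =
          [set G in faces K i.+1 | G == F :|: F'].
  apply/setP => G; rewrite !in_set -!faces_mem -subUset.
  by case: (boolP (G \in _)) => // /subUE.
case: (boolP (F :|: F' \in faces K i.+1)) => UK.
  rewrite /= -(cards1 (F :|: F')); apply: eq_card => G.
  by rewrite !inE -!faces_mem andbC; case: eqP => // ->.
apply/eqP; rewrite /= cards_eq0; apply/eqP/setP => G.
by rewrite !inE -!faces_mem andbC; case: eqP => // ->; rewrite (negbTE UK).
Qed.

Section Tented.

Variables m r : nat.

Local Notation K := (tented m.+1 r).

Lemma tentedP (S : {set 'I_m.+1}) :
  reflect (exists2 F : {set 'I_m.+1}, (#|F| == r) && (ord_max \notin F) & S \subset ord_max |: F)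
          (S \in K).
Proof.
have apexE : [set x : 'I_m.+1 | val x == m.+1.-1] = [set ord_max].
  by apply/setP => x; rewrite !inE.
rewrite inE; apply: (iffP existsP) => [[F /and3P [cF /forallP ltF sS]]|[F]].
  exists F; last by rewrite setUC -apexE.
  by rewrite cF; apply/negP => /(implyP (ltF ord_max)); rewrite /= ltnn.
case/andP=> cF FNapex sS; exists F; rewrite cF apexE setUC sS andbT.
apply/forallP => x; apply/implyP => xF /=.
rewrite ltn_neqAle -ltnS ltn_ord andbT; apply: contraNneq FNapex => ex.
by rewrite (_ : ord_max = x) //; apply: val_inj; rewrite /= ex.
Qed.

Lemma tented_simplicial : is_simplicial_complex K.
Proof.
move=> A B /tentedP [F FK sA] sBA; apply/tentedP; exists F => //.
exact: subset_trans sA.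
Qed.

Lemma facets_tented (G : {set 'I_m.+1}) :
  (G \in faces K r) = (ord_max \in G) && (#|G| == r.+1).
Proof.
rewrite faces_mem; apply/idP/idP.
  case/andP => /tentedP [F /andP [/eqP cF FNapex] sG] /eqP cG.
  have cU : #|ord_max |: F| = r.+1 by rewrite cardsU1 FNapex cF.
  have /eqP -> : G == ord_max |: F by rewrite eqEcard sG cU cG leqnn.
  by rewrite setU11 cU eqxx.
case/andP => apexG /eqP cG; rewrite cG eqxx andbT.
apply/tentedP; exists (G :\ ord_max); last by rewrite setD1K.
by move: cG; rewrite (cardsD1 ord_max) apexG add1n => -[->]; rewrite eqxx setD11.
Qed.

Hypothesis r_gt0 : 0 < r.

Lemma face_deg_tented (S : {set 'I_m.+1}) : #|S| = r ->
  face_deg K r.-1 S = if ord_max \in S then m.+1 - r else 1.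
Proof.
move=> cS; rewrite /face_deg prednK //.
have cofacesE : [set G in faces K r | S \subset G] =
    [set G : {set 'I_m.+1} | (ord_max \in G) && (#|G| == r.+1) && (S \subset G)].
  by apply/setP => G; rewrite [in LHS]in_set facets_tented in_set.
rewrite cofacesE; case: ifP => apexS.
  rewrite (_ : [set G | _] = [set y |: S | y in ~: S]).
    rewrite card_in_imset; first by rewrite cardsCs setCK card_ord cS.
    move=> y z; rewrite !inE => yS zS eyz.
    by move: (setU11 y S); rewrite eyz in_setU1 (negbTE yS) orbF => /eqP.
  apply/setP => G; rewrite in_set; apply/idP/imsetP.
    case/andP => /andP [_ /eqP cG] sSG.
    have [|y yS ->] := setU1_of_subset_card_succ sSG; first by rewrite cG cS.
    by exists y; rewrite // inE.
  case=> y; rewrite inE => yS ->.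
  by rewrite in_setU1 apexS orbT cardsU1 yS cS eqxx subsetUr.
rewrite -(cards1 (ord_max |: S)); apply: eq_card => G; rewrite !inE.
apply/idP/eqP => [/andP [/andP [apexG /eqP cG] sSG]|->].
  by apply/esym/eqP; rewrite eqEcard subUset sub1set apexG sSG cardsU1 apexS cS cG leqnn.
by rewrite setU11 cardsU1 apexS cS eqxx subsetUr.
Qed.

Lemma sum_face_deg_tented (G : {set 'I_m.+1}) : G \in faces K r ->
  \sum_(F in faces K r.-1 | F \subset G) face_deg K r.-1 F = 1 + r * (m.+1 - r).
Proof.
move=> GK; have GT : G \in K by rewrite faces_mem in GK; case/andP: GK.
move: GK; rewrite facets_tented => /andP [apexG /eqP cG].
have cGD x : x \in G -> #|G :\ x| = r.
  by move=> xG; move: cG; rewrite (cardsD1 x) xG => -[].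
have subfacesE F : (F \in faces K r.-1) && (F \subset G) = (F \in [set G :\ x | x in G]).
  rewrite faces_mem prednK //; apply/idP/imsetP.
    case/andP => /andP [_ /eqP cF] sFG.
    have [|x xF ->] := setU1_of_subset_card_succ sFG; first by rewrite cG cF.
    by exists x; rewrite ?setU11 ?setU1K.
  case=> x xG ->; rewrite subD1set andbT cGD // eqxx andbT.
  exact: tented_simplicial GT (subD1set G x).
rewrite (eq_bigl _ _ subfacesE) big_imset /=; last first.
  move=> x y xG yG eD; apply/eqP; apply: contraT => xy.
  by move: (setD11 x G); rewrite eD in_setD1 xy xG.
rewrite (bigD1 ord_max) //= face_deg_tented ?cGD // setD11; congr (_ + _).
rewrite (eq_bigr (fun=> m.+1 - r)) => [|x /andP [xG xNapex]]; last first.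
  by rewrite face_deg_tented ?cGD // in_setD1 eq_sym xNapex apexG.
rewrite sum_nat_cond_const -(cGD ord_max apexG); congr (_ * _).
by apply: eq_card => x; rewrite !inE andbC.
Qed.

Hypothesis r_le_m : r <= m.

Lemma face_deg_tented_gt0 (F : {set 'I_m.+1}) :
  F \in faces K r.-1 -> 0 < face_deg K r.-1 F.
Proof.
rewrite faces_mem prednK // => /andP [_ /eqP cF].
by rewrite face_deg_tented //; case: ifP; rewrite // subn_gt0.
Qed.

Lemma tented_face_exists : exists F, F \in faces K r.-1.
Proof.
pose F : {set 'I_m.+1} := [set widen_ord (leqW r_le_m) y | y : 'I_r].
have cF : #|F| = r by rewrite card_imset ?card_ord // => x y [/val_inj].
exists F; rewrite faces_mem prednK // cF eqxx andbT.
apply/tentedP; exists F; last exact: subsetUr.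
rewrite cF eqxx; apply/imsetP => -[y _ /(congr1 val) /= ey].
by move: (ltn_ord y); rewrite -ey ltnNge r_le_m.
Qed.

End Tented.

Local Open Scope ring_scope.

Lemma QupE (R : nzRingType) (T : finType) (K : {set {set T}}) (i : nat)
  (f : {set T} -> R) F : F \in faces K i ->
  Qup K i f F = \sum_(G in faces K i.+1 | F \subset G) \sum_(F' in faces K i | F' \subset G) f F'.
Proof.
move=> FK; rewrite (exchange_big_dep (mem (faces K i))) /=; last by move=> ? ? _ /andP [].
have countE F' : \sum_(G | (G \in faces K i.+1) && (F \subset G) &&
                          ((F' \in faces K i) && (F' \subset G))) f F' =
    ((F' \in faces K i) * #|[set G in faces K i.+1 | (F \subset G) && (F' \subset G)]|)%:R
      * f F'.
  case: (boolP (F' \in faces K i)) => F'K; last by rewrite big1 ?mul0r // => G; rewrite andbF.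
  by rewrite mul1n mulr_natl -sumr_const; apply: eq_bigl => G; rewrite in_set /= -!andbA.
under eq_bigr do rewrite countE.
rewrite (bigD1 F) //= FK mul1n /Qup; congr (_ * _ + _).
  by congr _%:R; apply: eq_card => G; rewrite !inE andbb.
rewrite [RHS]big_mkcond [LHS]big_mkcond /=; apply: eq_bigr => F' _.
case: (boolP (F' \in faces K i)) => //= F'K; rewrite mul1n /up_nb.
have [->|F'F] /= := eqVneq F' F => //.
by rewrite card_cofaces2 //; case: (_ \in _); rewrite ?mul1r ?mul0r.
Qed.

Lemma Qup_face_deg (R : nzRingType) (T : finType) (K : {set {set T}}) (i c : nat) :
  (forall G, G \in faces K i.+1 -> (\sum_(F in faces K i | F \subset G) face_deg K i F)%N = c) ->
  forall F, F \in faces K i ->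
    Qup K i (fun F => (face_deg K i F)%:R) F = c%:R * (face_deg K i F)%:R :> R.
Proof.
move=> sum_deg F FK; rewrite QupE //.
rewrite (eq_bigr (fun=> c%:R)) => [|G /andP [GK _]]; last by rewrite -natr_sum sum_deg.
rewrite sumr_const mulr_natr /face_deg; congr (_ *+ _).
by apply: eq_card => G; rewrite inE.
Qed.

Lemma Qup_eigenvalue_le (R : realFieldType) (T : finType) (K : {set {set T}}) (i : nat)
    (g : {set T} -> R) (lam mu : R) :
  (forall F, F \in faces K i -> 0 < g F) ->
  (forall F, F \in faces K i -> Qup K i g F = lam * g F) ->
  is_eigenvalue_Qup K i mu -> mu <= lam.
Proof.
move=> g_gt0 g_eig [f [[F0 F0K f0] f_eig]].
pose h F := `|f F| / g F.
have [F FK h_max] := @arg_maxP _ _ _ F0 (mem (faces K i)) h F0K.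
have f_le F' : F' \in faces K i -> `|f F'| <= h F * g F'.
  by move=> F'K; rewrite -ler_pdivrMr ?g_gt0 //; exact: h_max.
have fF : `|f F| = h F * g F by rewrite /h divfK // gt_eqF ?g_gt0.
have fF_gt0 : 0 < `|f F|.
  rewrite fF mulr_gt0 ?g_gt0 //; apply: lt_le_trans (h_max F0 F0K).
  by rewrite divr_gt0 ?g_gt0 ?normr_gt0.
(* Q has nonnegative entries, so |Q f| <= Q |f| <= (h F) Q g = lam |f F| at F. *)
suff : `|mu| * `|f F| <= lam * `|f F|.
  by rewrite ler_pM2r //; apply: le_trans; exact: ler_norm.
rewrite -normrM -f_eig // /Qup; apply: le_trans (ler_normD _ _) _.
rewrite fF mulrCA -g_eig // /Qup mulrDr; apply: lerD.
  by rewrite normrM ger0_norm ?ler0n // mulrCA -fF.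
apply: le_trans (ler_norm_sum _ _ _) _; rewrite mulr_sumr.
by apply: ler_sum => F' /andP [F'K _]; exact: f_le.
Qed.

Lemma is_largest_eigenvalue_Qup_pos (R : realFieldType) (T : finType) (K : {set {set T}})
    (i : nat) (g : {set T} -> R) (lam : R) :
  (exists F, F \in faces K i) ->
  (forall F, F \in faces K i -> 0 < g F) ->
  (forall F, F \in faces K i -> Qup K i g F = lam * g F) ->
  is_largest_eigenvalue_Qup K i lam.
Proof.
move=> [F FK] g_gt0 g_eig; split; last by move=> mu; exact: Qup_eigenvalue_le g_eig.
by exists g; split => //; exists F; rewrite // gt_eqF ?g_gt0.
Qed.

Theorem mainTheorem5 (R : realFieldType) (r n : nat) :
  (1 <= r)%N -> (r.+1 <= n)%N ->
  is_largest_eigenvalue_Qup (tented n r) r.-1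
    (r%:R * n%:R - r%:R ^+ 2 + 1 : R).
Proof.
move=> r_gt0; case: n => [//|m] r_le_m.
have -> : r%:R * m.+1%:R - r%:R ^+ 2 + 1 = (1 + r * (m.+1 - r))%N%:R :> R.
  by rewrite natrD natrM natrB 1?leqW //; ring.
apply: (is_largest_eigenvalue_Qup_pos (g := fun F => (face_deg (tented m.+1 r) r.-1 F)%:R)).
- exact: tented_face_exists.
- by move=> F FK; rewrite ltr0n face_deg_tented_gt0.
- apply: Qup_face_deg => G; rewrite prednK //; exact: sum_face_deg_tented.
Qed.
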